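(* Let $E$ be a Banach lattice. Then the set $B_{UDP}(E)$ of all $uaw$-Dunford-Pettis operators on $E$ is a closed subalgebra (with respect to the operator norm) of the algebra $B(E)$ of all bounded operators on $E$.
   Context: A net $(x_\alpha)$ in a Banach lattice $E$ is $uaw$-convergent to $x$ if $|x_\alpha-x|\wedge u\to 0$ weakly for every $u\in E_+$. A bounded operator $T\colon E\to E$ is $uaw$-Dunford-Pettis if every norm bounded $uaw$-null sequence $(x_n)$ in $E$ satisfies $\|Tx_n\|\to 0$. *)

From HB Require Import structures.
From mathcomp Require Import all_boot all_order all_algebra.
From mathcomp Require Import all_classical all_reals all_analysis.
Set Implicit Arguments. Unset Strict Implicit. Unset Printing Implicit Defensive.
Import Order.TTheory GRing.Theory Num.Theory.
Import numFieldNormedType.Exports.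
Local Open Scope ring_scope.
Local Open Scope classical_set_scope.

(* A (real) Banach lattice: a real Banach space E together with a vector
   lattice order (with explicit sup/inf operations) whose norm is a lattice
   norm: |x| <= |y| implies ||x|| <= ||y||. *)
Record BanachLattice (R : realType) (E : completeNormedModType R) := {
  bl_le : E -> E -> Prop;
  bl_join : E -> E -> E;
  bl_meet : E -> E -> E;
  bl_refl : forall x, bl_le x x;
  bl_antisym : forall x y, bl_le x y -> bl_le y x -> x = y;
  bl_trans : forall x y z, bl_le x y -> bl_le y z -> bl_le x z;
  bl_join_l : forall x y, bl_le x (bl_join x y);
  bl_join_r : forall x y, bl_le y (bl_join x y);
  bl_join_least : forall x y z, bl_le x z -> bl_le y z -> bl_le (bl_join x y) z;
  bl_meet_l : forall x y, bl_le (bl_meet x y) x;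
  bl_meet_r : forall x y, bl_le (bl_meet x y) y;
  bl_meet_greatest : forall x y z, bl_le z x -> bl_le z y -> bl_le z (bl_meet x y);
  bl_add : forall x y z, bl_le x y -> bl_le (x + z) (y + z);
  bl_scale : forall (a : R) x y, 0 <= a -> bl_le x y -> bl_le (a *: x) (a *: y);
  bl_norm_mono : forall x y,
    bl_le (bl_join x (- x)) (bl_join y (- y)) -> `|x| <= `|y|
}.

Section Defs.
Context {R : realType} {E : completeNormedModType R} (L : BanachLattice E).

Definition bl_abs (x : E) : E := bl_join L x (- x).

Definition cont_lin_functional (f : E -> R) : Prop :=
  (forall (a : R) (x y : E), f (a *: x + y) = a * f x + f y) /\ continuous f.

Definition bounded_operator (T : E -> E) : Prop :=
  (forall (a : R) (x y : E), T (a *: x + y) = a *: T x + T y) /\ continuous T.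

Definition weakly_null (y : nat -> E) : Prop :=
  forall f, cont_lin_functional f -> (fun n => f (y n)) @ \oo --> (0 : R).

Definition uaw_converges (x : nat -> E) (x0 : E) : Prop :=
  forall u : E, bl_le L 0 u ->
    weakly_null (fun n => bl_meet L (bl_abs (x n - x0)) u).

Definition norm_bounded_seq (x : nat -> E) : Prop :=
  exists M : R, forall n, `|x n| <= M.

Definition uaw_DP (T : E -> E) : Prop :=
  bounded_operator T /\
  forall x : nat -> E, norm_bounded_seq x -> uaw_converges x 0 ->
    (fun n => `|T (x n)|) @ \oo --> (0 : R).

End Defs.

(* Only the norm-null conclusion of the uaw-Dunford-Pettis property is ever
   manipulated: it is preserved by sums and scalar multiples, by composition on
   the left with any bounded operator (continuity at 0), and by uniform limits,
   since on a bounded sequence an e-close operator changes norms by at most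
   e times the bound. *)

From HB Require Import structures.
From mathcomp Require Import all_boot all_order all_algebra.
From mathcomp Require Import all_classical all_reals all_analysis.
From mathcomp Require Import ring lra.
Set Implicit Arguments. Unset Strict Implicit. Unset Printing Implicit Defensive.
Import Order.TTheory GRing.Theory Num.Theory.
Import numFieldNormedType.Exports.
Local Open Scope ring_scope.
Local Open Scope classical_set_scope.

Section BoundedOperators.
Context {R : realType} {E : completeNormedModType R}.
Implicit Types S T : E -> E.

Lemma bounded_operator0 T : bounded_operator T -> T 0 = 0.
Proof.
case=> linT _; have := linT (-1) 0 0.
by rewrite scaler0 addr0 scaleN1r addNr.
Qed.

Lemma bounded_operator_cst0 : bounded_operator (fun _ : E => 0).
Proof.
split; first by move=> a x y; rewrite scaler0 addr0.
by move=> x; exact: cst_continuous.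
Qed.

Lemma bounded_operatorD S T : bounded_operator S -> bounded_operator T ->
  bounded_operator (fun x => S x + T x).
Proof.
move=> [linS contS] [linT contT]; split.
- by move=> a x y; rewrite linS linT scalerDr addrACA.
- by move=> x; exact: (continuousD (contS x) (contT x)).
Qed.

Lemma bounded_operatorZ (a : R) T : bounded_operator T ->
  bounded_operator (fun x => a *: T x).
Proof.
move=> [linT contT]; split.
- by move=> b x y; rewrite linT scalerDr !scalerA mulrC.
- by move=> x; apply: continuousZ; [exact: cst_continuous | exact: contT].
Qed.

Lemma bounded_operator_comp S T : bounded_operator S -> bounded_operator T ->
  bounded_operator (fun x => S (T x)).
Proof.
move=> [linS contS] [linT contT]; split.
- by move=> a x y; rewrite linT linS.
- by move=> x; exact: (continuous_comp (contT x) (contS (T x))).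
Qed.

Lemma bounded_operator_norm_cvg0 S (y : nat -> E) : bounded_operator S ->
  `|y n| @[n --> \oo] --> 0 -> `|S (y n)| @[n --> \oo] --> 0.
Proof.
move=> bS /norm_cvg0 y0.
have Sy0 : S (y n) @[n --> \oo] --> S 0.
  by case: bS => _ contS; exact: (continuous_cvg _ (contS 0) y0).
by move/cvg_norm: Sy0; rewrite bounded_operator0 // normr0.
Qed.

End BoundedOperators.

(* On a sequence bounded by [M], [|T x_n| <= |S x_n| + e M] for every
   [e]-approximation [S] of [T]. *)
Lemma norm_cvg0_approx (R : realType) (U V : normedModType R) (T : U -> V)
    (x : nat -> U) (M : R) :
  (forall n, `|x n| <= M) ->
  (forall e, 0 < e -> exists S : U -> V,
     `|S (x n)| @[n --> \oo] --> 0 /\ forall y, `|S y - T y| <= e * `|y|) ->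
  `|T (x n)| @[n --> \oo] --> 0.
Proof.
move=> xM approxT.
have M0 : 0 <= M by apply: le_trans (xM 0%N).
apply/cvgr0Pnorm_lt => eps eps0.
pose e := eps / (2 * (M + 1)).
have e0 : 0 < e by rewrite divr_gt0 // mulr_gt0 // ltr_wpDl.
have eM : e * M + e = eps / 2 by rewrite -[e in _ + e]mulr1 -mulrDr /e; field; lra.
have [S [/cvgr0Pnorm_lt Sx0 ST]] := approxT e e0.
near=> n.
have Sxn : `|S (x n)| < eps / 2.
  by rewrite -[`|S (x n)|]normr_id; near: n; apply: Sx0; rewrite divr_gt0.
have STxn : `|S (x n) - T (x n)| <= e * M.
  by apply: le_trans (ST _) _; rewrite ler_pM2l.
have : `|T (x n)| <= `|S (x n)| + `|S (x n) - T (x n)|.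
  by rewrite -[T (x n) in X in X <= _](subKr (S (x n))) (le_trans (ler_normD _ _)) // normrN.
rewrite normr_id; clearbody e; lra.
Unshelve. all: by end_near.
Qed.

Section UawDunfordPettis.
Context {R : realType} {E : completeNormedModType R} (L : BanachLattice E).
Implicit Types S T : E -> E.

Lemma uaw_DP_cst0 : uaw_DP L (fun _ => 0).
Proof.
split; first exact: bounded_operator_cst0.
by move=> x _ _; rewrite normr0; exact: cvg_cst.
Qed.

Lemma uaw_DPD S T : uaw_DP L S -> uaw_DP L T -> uaw_DP L (fun x => S x + T x).
Proof.
move=> [bS DPS] [bT DPT]; split; first exact: bounded_operatorD.
move=> x xb xuaw.
apply: (@squeeze_cvgr _ _ _ _ (fun _ => 0) (fun n => `|S (x n)| + `|T (x n)|)).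
- by apply: nearW => n /=; rewrite normr_ge0 ler_normD.
- exact: cvg_cst.
- by rewrite -[0]addr0; apply: cvgD; [exact: DPS | exact: DPT].
Qed.

Lemma uaw_DPZ (a : R) T : uaw_DP L T -> uaw_DP L (fun x => a *: T x).
Proof.
move=> [bT DPT]; split; first exact: bounded_operatorZ.
move=> x xb xuaw; under eq_fun do rewrite normrZ.
by rewrite -(mulr0 `|a|); apply: cvgMl_tmp; exact: DPT.
Qed.

Lemma uaw_DP_compl S T : bounded_operator S -> uaw_DP L T ->
  uaw_DP L (fun x => S (T x)).
Proof.
move=> bS [bT DPT]; split; first exact: bounded_operator_comp.
by move=> x xb xuaw; apply: bounded_operator_norm_cvg0 => //; exact: DPT.
Qed.

Lemma uaw_DP_closed T : bounded_operator T ->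
  (forall e : R, 0 < e -> exists S, uaw_DP L S /\
     forall x, `|S x - T x| <= e * `|x|) ->
  uaw_DP L T.
Proof.
move=> bT approxT; split=> // x [M xM] xuaw.
apply: (norm_cvg0_approx xM) => e /approxT[S [[_ DPS] ST]].
exists S; split; last exact: ST.
by apply: DPS xuaw; exists M.
Qed.

End UawDunfordPettis.

Theorem proposition2p34 (R : realType) (E : completeNormedModType R)
    (L : BanachLattice E) :
  (* B_UDP(E) is a subalgebra of B(E) ... *)
  (forall T, uaw_DP L T -> bounded_operator T) /\
  uaw_DP L (fun _ => 0) /\
  (forall S T, uaw_DP L S -> uaw_DP L T -> uaw_DP L (fun x => S x + T x)) /\
  (forall (a : R) T, uaw_DP L T -> uaw_DP L (fun x => a *: T x)) /\
  (forall S T, uaw_DP L S -> uaw_DP L T -> uaw_DP L (fun x => S (T x))) /\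
  (* ... which is closed in the operator norm topology: *)
  (forall T, bounded_operator T ->
     (forall e : R, 0 < e -> exists S, uaw_DP L S /\
        forall x, `|S x - T x| <= e * `|x|) ->
     uaw_DP L T).
Proof.
split; first by move=> T [].
split; first exact: uaw_DP_cst0.
split; first exact: uaw_DPD.
split; first exact: uaw_DPZ.
split; first by move=> S T [bS _]; exact: uaw_DP_compl.
exact: uaw_DP_closed.
Qed.
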